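(* Let $\lambda$ and $g$ be as in the context and let $j\ge0$ be an integer. Then \[ \left[(-\lambda)g\right]^{j}\circ g(x)=g\!\left((-\lambda)^{j}x\right) \] for all $x$ with $-\lambda^{-j}\le x\le\lambda^{-j}$, where $\left[(-\lambda)g\right]^{j}$ is the $j$-fold composition of the map $x\mapsto(-\lambda)g(x)$.
   Context: There is a unique constant $\lambda=2.5029\ldots$ and a unique infinitely (period-doubling) renormalizable analytic unimodal map $g:[-1,1]\to[-1,1]$ solving $g(x)=-\lambda\, g^{2}(-x/\lambda)$ for $-1\le x\le1$ ($g^2=g\circ g$). Unimodal means: $-1$ is the unique fixed point with positive multiplier, $g(1)=-1$, and $g$ has a unique maximum at an interior nondegenerate critical point. Moreover $g$ is analytic near $[-1,1]$ and even. *)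

From Stdlib Require Import Reals.
From Coquelicot Require Import Coquelicot.
Open Scope R_scope.

Definition analytic_near_unit_interval (g : R -> R) : Prop :=
  exists eps : R, 0 < eps /\
    forall x0 : R, Rabs x0 < 1 + eps ->
      exists (r : R) (a : nat -> R), 0 < r /\
        forall x : R, Rabs (x - x0) < r -> is_pseries a (x - x0) (g x).

Definition maps_unit_interval (g : R -> R) : Prop :=
  forall x : R, -1 <= x <= 1 -> -1 <= g x <= 1.

Definition unimodal (g : R -> R) : Prop :=
  (g (-1) = -1 /\ 0 < Derive g (-1) /\
   forall x : R, -1 <= x <= 1 -> g x = x -> 0 < Derive g x -> x = -1) /\
  g 1 = -1 /\
  exists c : R, -1 < c < 1 /\
    Derive g c = 0 /\ Derive_n g 2 c <> 0 /\
    forall x : R, -1 <= x <= 1 -> x <> c -> g x < g c.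

Definition feigenbaum_eq (lambda : R) (g : R -> R) : Prop :=
  forall x : R, -1 <= x <= 1 -> g x = - lambda * g (g (- x / lambda)).

Definition even_fun (g : R -> R) : Prop := forall x : R, g (- x) = g x.

Definition scaled_iter (lambda : R) (g : R -> R) (j : nat) : R -> R :=
  Nat.iter j (fun y => (- lambda) * g y).

(** The Feigenbaum equation says precisely that [x |-> -lambda x] conjugates
    [g^2] on [[-1/lambda, 1/lambda]] to [(-lambda) g] on [[-1, 1]]:
    [g (-lambda z) = (-lambda) g (g z)] for [|z| <= 1/lambda].  Applying this
    [j] times, each time to a point shrunk by a further factor [lambda], gives
    the identity on [[-lambda^-j, lambda^-j]]. *)

From Stdlib Require Import Reals Lra.
From Coquelicot Require Import Coquelicot.
Open Scope R_scope.

Section ScaledIteration.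

Variables (lambda : R) (g : R -> R).
Hypothesis lambda_ge1 : 1 <= lambda.
Hypothesis Hfeig : feigenbaum_eq lambda g.

Lemma feigenbaum_eq_scaled (z : R) :
  Rabs z <= / lambda -> g (- lambda * z) = - lambda * g (g z).
Proof.
  intros Hz.
  assert (Hy : Rabs (- lambda * z) <= 1).
  { rewrite Rabs_mult, Rabs_Ropp, (Rabs_pos_eq lambda) by lra.
    apply (Rmult_le_compat_l lambda) in Hz; [|lra].
    now rewrite Rinv_r in Hz by lra. }
  rewrite (Hfeig _ (proj1 (Rabs_le_between _ _) Hy)).
  now replace (- (- lambda * z) / lambda) with z by (field; lra).
Qed.

Lemma scaled_iter_comp_g (j : nat) (x : R) :
  Rabs x <= / lambda ^ j ->
  scaled_iter lambda g j (g x) = g ((- lambda) ^ j * x).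
Proof.
  revert x; induction j as [|j IH]; intros x Hx.
  - simpl; now rewrite Rmult_1_l.
  - assert (Hx_small : Rabs x <= / lambda).
    { apply (Rle_trans _ _ _ Hx), Rinv_le_contravar; [lra|].
      rewrite <- (Rmult_1_r lambda) at 1; simpl.
      apply Rmult_le_compat_l; [lra|]. now apply pow_R1_Rle. }
    assert (Hx_scaled : Rabs (- lambda * x) <= / lambda ^ j).
    { rewrite Rabs_mult, Rabs_Ropp, (Rabs_pos_eq lambda) by lra.
      simpl in Hx; rewrite Rinv_mult in Hx.
      apply (Rmult_le_compat_l lambda) in Hx; [|lra].
      now rewrite <- Rmult_assoc, Rinv_r, Rmult_1_l in Hx by lra. }
    unfold scaled_iter; rewrite Nat.iter_succ_r; fold (scaled_iter lambda g j).
    rewrite <- (feigenbaum_eq_scaled _ Hx_small), (IH _ Hx_scaled).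
    f_equal; simpl; ring.
Qed.

End ScaledIteration.

Theorem mainTheorem8 (lambda : R) (g : R -> R)
  (Hlam : 2.5029 < lambda < 2.5030)
  (Hmaps : maps_unit_interval g)
  (Hfeig : feigenbaum_eq lambda g)
  (Hunim : unimodal g)
  (Hanal : analytic_near_unit_interval g)
  (Heven : even_fun g)
  (j : nat) (x : R)
  (Hx : - / lambda ^ j <= x <= / lambda ^ j) :
  scaled_iter lambda g j (g x) = g ((- lambda) ^ j * x).
Proof.
  apply scaled_iter_comp_g; [lra | exact Hfeig |].
  now apply Rabs_le.
Qed.
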